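(* (1) Let $T=T((v_1,1),\dots,(v_l,1);0)$ with $l\ge2$ and let $\mathbb{G}=\mathbb{G}(T)$. For any positive integers $k_1,\dots,k_l$ there exist a non-negative integer $q$ and a finite index subgroup $H$ of $\mathbb{G}$ such that $H\cong\mathbb{G}(S)$, where $S=T((v_1,k_1),\dots,(v_l,k_l);q)$. In particular $\mathbb{G}(S)$ and $\mathbb{G}(T)$ are commensurable. (2) If $\mathbb{G}=\mathbb{G}(T)$ with $T=T((d,2);0)$, then for any integer $k>2$ there exists a finite index subgroup $H$ of $\mathbb{G}$ with $H\cong\mathbb{G}(S)$, where $S=T((d,k);0)$.
   Context: For a finite simplicial graph $\Gamma$, $\mathbb{G}(\Gamma)$ is the right-angled Artin group with generators the vertices of $\Gamma$ and relations $[u,v]=1$ for each edge. Two groups are commensurable if they have isomorphic finite index subgroups. Encoding of trees of diameter 4: in a finite tree of diameter 4 the middle vertex of any path of length 4 is the same vertex $c$, the center; leaves adjacent to $c$ are hair vertices; other neighbours of $c$ are pivots. $T((d_1,k_1),\dots,(d_l,k_l);q)$ is the tree of diameter 4 with exactly $q\ge0$ hair vertices and, for each $i$, exactly $k_i$ pivots adjacent to exactly $d_i$ leaves, where $l,d_i,k_i$ are positive integers, $d_1<\dots<d_l$, and either $l\ge2$ or ($l=1$ and $k_1\ge2$). *)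

From mathcomp Require Import all_boot.
Set Implicit Arguments. Unset Strict Implicit. Unset Printing Implicit Defensive.

(** An element is represented by a word over
  V × bool ((x,false) = x, (x,true) = x^-1); two words represent the same
  element iff they are related by [raag_eq E], the congruence generated by
  free cancellation and commutation of adjacent letters along edges. *)

Section RAAG.
Variables (V : eqType) (E : rel V).

Definition word := seq (V * bool).

Inductive raag_eq : word -> word -> Prop :=
| re_refl w : raag_eq w w
| re_sym u w : raag_eq u w -> raag_eq w u
| re_trans u w z : raag_eq u w -> raag_eq w z -> raag_eq u z
| re_cancel (u w : word) (x : V) (b : bool) :
    raag_eq (u ++ (x, b) :: (x, ~~ b) :: w) (u ++ w)
| re_comm (u w : word) (x y : V) (b c : bool) : E x y ->
    raag_eq (u ++ (x, b) :: (y, c) :: w) (u ++ (y, c) :: (x, b) :: w).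

Definition winv (w : word) : word := rev (map (fun p => (p.1, ~~ p.2)) w).

Definition is_subgroup (H : word -> Prop) : Prop :=
  [/\ (forall u w, raag_eq u w -> H u -> H w),
      H [::],
      (forall u w, H u -> H w -> H (u ++ w)) &
      (forall u, H u -> H (winv u))].

Definition finite_index (H : word -> Prop) : Prop :=
  exists reps : seq word, forall w, exists r, r \in reps /\
    exists h, H h /\ raag_eq w (r ++ h).

End RAAG.

Definition iso_to_subgroup (V' V : eqType) (E' : rel V') (E : rel V)
  (H : word V -> Prop) : Prop :=
  exists f : word V' -> word V,
    [/\ (forall a b, raag_eq E' a b -> raag_eq E (f a) (f b)),
        (forall a b, raag_eq E (f (a ++ b)) (f a ++ f b)),
        (forall a b, raag_eq E (f a) (f b) -> raag_eq E' a b),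
        (forall a, H (f a)) &
        (forall w, H w -> exists a, raag_eq E (f a) w)].

(** Vertices: the center, q hair vertices, for each i < l exactly k_i pivots
  (i,j), and for each pivot (i,j) exactly d_i leaves.  Edges: center–hair,
  center–pivot, pivot–its leaves. *)

Section Tree.
Variables (l : nat) (d k : 'I_l -> nat) (q : nat).

Definition pivT : finType := {i : 'I_l & 'I_(k i)}.
Definition leafT : finType := {p : pivT & 'I_(d (tag p))}.
Definition tvert : finType := (unit + 'I_q + pivT + leafT)%type.

Definition tedge0 (x y : tvert) : bool :=
  match x, y with
  | inl (inl (inl _)), inl (inl (inr _)) => true
  | inl (inl (inl _)), inl (inr _) => true
  | inl (inr p), inr lf => tag lf == p
  | _, _ => false
  end.

Definition tree_adj : rel tvert := fun x y => tedge0 x y || tedge0 y x.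

End Tree.

(* Both parts come from one construction.  Fix a pivot x of a tree T of
   diameter 4, a set [one] of pivots containing x and m >= 1, and let
   G(T) -> Z/m send the pivots in [one] to 1 and every other generator to 0.
   Reidemeister-Schreier rewriting with the transversal 1, x, ..., x^(m-1)
   shows that this index-m kernel is again the RAAG of a tree of diameter 4:
   the center; the conjugates x^s h x^-s of each hair h; the conjugates
   x^s P x^-s, with their leaves, of each pivot P outside [one]; for each P in
   [one] the pivot P^m, keeping the leaves of P; and the hairs x^s P x^-(s+1)
   (s < m - 1) for P in [one] other than x.
   Taking for [one] all pivots outside one class multiplies the size of that
   class by m; when l >= 2 an x outside the class exists, and doing this class
   by class, composing the finite-index embeddings, gives (1).  With a single
   class of two pivots and [one] = {x} the kernel is G(T((d, m + 1); 0)),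
   which is (2). *)

From mathcomp Require Import all_boot zify.
From Stdlib Require Import Setoid Morphisms FunctionalExtensionality.
Set Implicit Arguments. Unset Strict Implicit. Unset Printing Implicit Defensive.

Lemma nseqSr (A : Type) n (a : A) : nseq n.+1 a = nseq n a ++ [:: a].
Proof. by rewrite -addn1 nseqD. Qed.

Section RaagEqCongruence.
Variables (V : eqType) (E : rel V).
Local Notation "u ≡ w" := (raag_eq E u w) (at level 70).

Lemma raag_eq_catl p u w : u ≡ w -> p ++ u ≡ p ++ w.
Proof.
elim=> {u w} [w|u w _ IH|u w z _ IH1 _ IH2|u w a b|u w a b c b0 Hab].
- exact: re_refl.
- exact: re_sym.
- exact: re_trans IH1 IH2.
- by rewrite !catA; apply: re_cancel.
- by rewrite !catA; apply: re_comm.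
Qed.

Lemma raag_eq_catr z u w : u ≡ w -> u ++ z ≡ w ++ z.
Proof.
elim=> {u w} [w|u w _ IH|u w z' _ IH1 _ IH2|u w a b|u w a b c b0 Hab].
- exact: re_refl.
- exact: re_sym.
- exact: re_trans IH1 IH2.
- by rewrite -!catA /=; apply: re_cancel.
- by rewrite -!catA /=; apply: re_comm.
Qed.

End RaagEqCongruence.

#[export] Instance raag_eq_Equivalence V E : Equivalence (@raag_eq V E).
Proof. by split; [exact: re_refl | exact: re_sym | exact: re_trans]. Qed.

#[export] Instance cat_raag_eq_Proper V E :
  Proper (@raag_eq V E ==> @raag_eq V E ==> @raag_eq V E) (@cat (V * bool)).
Proof.
by move=> u u' Hu w w' Hw; apply: re_trans (raag_eq_catr _ Hu) (raag_eq_catl _ Hw).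
Qed.

#[export] Instance cons_raag_eq_Proper V E :
  Proper (eq ==> @raag_eq V E ==> @raag_eq V E) (@cons (V * bool)).
Proof. by move=> a _ <- w w' Hw; exact: (raag_eq_catl [:: a] Hw). Qed.

#[export] Hint Resolve re_refl : core.

Section WordCalculus.
Variables (V : eqType) (E : rel V).
Local Notation "u ≡ w" := (raag_eq E u w) (at level 70).

Lemma winv_cat (u w : word V) : winv (u ++ w) = winv w ++ winv u.
Proof. by rewrite /winv map_cat rev_cat. Qed.

Lemma winv_cons a (w : word V) : winv (a :: w) = winv w ++ [:: (a.1, ~~ a.2)].
Proof. by rewrite /winv /= rev_cons cats1. Qed.

Lemma winvK : involutive (@winv V).
Proof.
move=> w; rewrite /winv map_rev revK -map_comp.
by elim: w => //= -[a b] w ->; rewrite negbK.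
Qed.

Lemma mulKVw (w z : word V) : w ++ winv w ++ z ≡ z.
Proof.
elim: w z => [|[y b] w IH] z; first exact: re_refl.
rewrite winv_cons -catA cat_cons (IH ([:: (y, ~~ b)] ++ z)).
exact: (re_cancel E [::] z y b).
Qed.

Lemma mulKw (w z : word V) : winv w ++ w ++ z ≡ z.
Proof. by have := mulKVw (winv w) z; rewrite winvK. Qed.

Lemma mulwV (w : word V) : w ++ winv w ≡ [::].
Proof. by have := mulKVw w [::]; rewrite cats0. Qed.

Lemma mulVw (w : word V) : winv w ++ w ≡ [::].
Proof. by have := mulKw w [::]; rewrite cats0. Qed.

Lemma raag_eq_winv (u w : word V) : u ≡ w -> winv u ≡ winv w.
Proof.
move=> uw; transitivity (winv u ++ w ++ winv w).
  by rewrite -{1}(cats0 (winv u)) (mulwV w).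
by rewrite -(raag_eq_catl (winv u) (raag_eq_catr (winv w) uw)) catA mulVw.
Qed.

Lemma raag_eq_divl (u w z : word V) : u ++ w ≡ z -> w ≡ winv u ++ z.
Proof. by move=> <-; rewrite mulKw. Qed.

Lemma commute_letter (a : V * bool) (w : word V) :
  all (fun c => E a.1 c.1) w -> a :: w ≡ w ++ [:: a].
Proof.
case: a => y b; elim: w => [|[z c] w IH] //= /andP[Eyz Ew].
transitivity ((z, c) :: (y, b) :: w); first exact: (re_comm [::] w b c Eyz).
exact: (raag_eq_catl [:: (z, c)] (IH Ew)).
Qed.

Lemma commute_words (u w : word V) :
  all (fun a => all (fun c => E a.1 c.1) w) u -> u ++ w ≡ w ++ u.
Proof.
elim: u => [|a u IH] /=; first by rewrite cats0.
case/andP=> Ea Eu.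
by rewrite (IH Eu) -cat_cons (commute_letter Ea) -catA.
Qed.

Lemma conj_commute (c u w : word V) : u ++ w ≡ w ++ u ->
  (c ++ u ++ winv c) ++ (c ++ w ++ winv c) ≡ (c ++ w ++ winv c) ++ (c ++ u ++ winv c).
Proof.
move=> uw; rewrite -!catA (mulKw c (w ++ winv c)) (mulKw c (u ++ winv c)) !catA.
by apply: raag_eq_catr; rewrite -!catA; apply: raag_eq_catl.
Qed.

Lemma conj_letter (a : V * bool) (c : word V) :
  all (fun y => E a.1 y.1) c -> c ++ a :: winv c ≡ [:: a].
Proof.
move=> Ea; rewrite -cat1s catA -(commute_letter Ea) /=.
exact: (raag_eq_catl [:: a] (mulwV c)).
Qed.

(* Commutation of inverse letters follows from that of positive ones by
   conjugating with cancellations. *)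
Section Minimality.
Variable R : word V -> word V -> Prop.
Hypothesis R_equiv : Equivalence R.
Hypothesis R_cat : Proper (R ==> R ==> R) (@cat (V * bool)).
Hypothesis R_cancel : forall y b, R [:: (y, b); (y, ~~ b)] [::].
Hypothesis R_comm : forall y z, E y z -> R [:: (y, false); (z, false)] [:: (z, false); (y, false)].
#[local] Existing Instances R_equiv R_cat.

Lemma R_comm_invl a b : R [:: a; b] [:: b; a] -> R [:: (a.1, ~~ a.2); b] [:: b; (a.1, ~~ a.2)].
Proof.
case: a => y c /= ab.
have Vc : R [:: (y, ~~ c); (y, c)] [::] by have := R_cancel y (~~ c); rewrite negbK.
transitivity ([:: (y, ~~ c); b] ++ [:: (y, c); (y, ~~ c)]).
  by rewrite R_cancel cats0; reflexivity.
transitivity ([:: (y, ~~ c); (y, c)] ++ [:: b; (y, ~~ c)]).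
  by change (R ([:: (y, ~~ c)] ++ [:: b; (y, c)] ++ [:: (y, ~~ c)])
              ([:: (y, ~~ c)] ++ [:: (y, c); b] ++ [:: (y, ~~ c)])); rewrite ab; reflexivity.
by rewrite Vc; reflexivity.
Qed.

Lemma R_comm_letters y z b c : E y z -> R [:: (y, b); (z, c)] [:: (z, c); (y, b)].
Proof.
move=> Eyz; have yz := R_comm Eyz.
have yz' : R [:: (y, b); (z, false)] [:: (z, false); (y, b)].
  by case: b; [exact: R_comm_invl yz | exact: yz].
by case: c => //; symmetry; apply: (R_comm_invl (a := (z, false))); symmetry.
Qed.

Lemma raag_eq_sub u w : u ≡ w -> R u w.
Proof.
elim=> {u w} [w|u w _ IH|u w z _ IH1 _ IH2|u w y b|u w y z b c Eyz].
- reflexivity.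
- by symmetry.
- by transitivity w.
- rewrite -[_ :: _ :: w]/([:: (y, b); (y, ~~ b)] ++ w) R_cancel; reflexivity.
- rewrite -[(y, b) :: _ :: w]/([:: (y, b); (z, c)] ++ w) (R_comm_letters b c Eyz).
  reflexivity.
Qed.

End Minimality.
End WordCalculus.


#[export] Instance winv_raag_eq_Proper V E : Proper (@raag_eq V E ==> @raag_eq V E) (@winv V).
Proof. by move=> u w; apply: raag_eq_winv. Qed.

Definition fi_embeds (V' V : eqType) (E' : rel V') (E : rel V) : Prop :=
  exists H : word V -> Prop,
    [/\ is_subgroup E H, finite_index E H & iso_to_subgroup E' E H].

Lemma fi_embeds_refl (V : eqType) (E : rel V) : fi_embeds E E.
Proof.
exists (fun _ => True); split=> //.
- by exists [:: [::]] => w; exists [::]; split; [rewrite inE | exists w].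
- by exists id; split=> // w _; exists w.
Qed.

Lemma fi_embeds_trans (V2 V1 V0 : eqType) (E2 : rel V2) (E1 : rel V1) (E0 : rel V0) :
  fi_embeds E2 E1 -> fi_embeds E1 E0 -> fi_embeds E2 E0.
Proof.
move=> [H2 [[H2sat H2nil H2cat H2inv] [reps2 cover2] [f2 [f2r f2h f2i f2H f2s]]]].
move=> [H1 [_ [reps1 cover1] [f1 [f1r f1h f1i f1H f1s]]]].
have f1_nil : raag_eq E0 (f1 [::]) [::].
  by have := f1h [::] [::]; rewrite cat0s => /re_sym /raag_eq_divl ->; apply: mulVw.
have f1_winv a : raag_eq E0 (f1 (winv a)) (winv (f1 a)).
  have : raag_eq E0 (f1 a ++ f1 (winv a)) [::].
    by rewrite -f1h (f1r _ _ (mulwV E1 a)) f1_nil.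
  by move/raag_eq_divl; rewrite cats0.
exists (fun w => exists a, H2 a /\ raag_eq E0 (f1 a) w); split.
- split.
  + by move=> u w uw [a [Ha au]]; exists a; rewrite au.
  + by exists [::].
  + move=> u w [a [Ha au]] [b [Hb bw]]; exists (a ++ b); split; first exact: H2cat.
    by rewrite f1h au bw.
  + move=> u [a [Ha au]]; exists (winv a); split; first exact: H2inv.
    by rewrite f1_winv au.
- exists [seq r1 ++ f1 r2 | r1 <- reps1, r2 <- reps2] => w.
  have [r1 [r1_in [h1 [Hh1 wE]]]] := cover1 w.
  have [a1 a1E] := f1s h1 Hh1.
  have [r2 [r2_in [h2 [Hh2 a1E']]]] := cover2 a1.
  exists (r1 ++ f1 r2); split; first exact: allpairs_f.
  exists (f1 h2); split; first by exists h2.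
  by rewrite wE -a1E (f1r _ _ a1E') f1h catA.
- exists (fun a => f1 (f2 a)); split.
  + by move=> a b ab; apply/f1r/f2r.
  + by move=> a b; rewrite (f1r _ _ (f2h a b)) f1h.
  + by move=> a b ab; apply/f2i/f1i.
  + by move=> a; exists (f2 a).
  + move=> w [a [Ha aw]]; have [b ba] := f2s a Ha.
    by exists b; rewrite (f1r _ _ ba).
Qed.

Section CyclicCover.
Variables (V V' : eqType) (E : rel V) (E' : rel V').
Local Notation "u ≡ w" := (raag_eq E u w) (at level 70).
Local Notation "u ≡' w" := (raag_eq E' u w) (at level 70).
Variables (m' : nat) (phi : V -> bool) (x : V).
Hypothesis phi_x : phi x.
Local Notation m := m'.+1.

Definition weight (a : V * bool) : nat := if a.2 then m - phi a.1 else phi a.1.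
Definition next_level s a : nat := (s + weight a) %% m.
Definition level s (w : word V) : nat := foldl next_level s w.
Definition xpow n : word V := nseq n (x, false).

(* [level] follows the coset of the homomorphism to Z/m sending a to phi a;
   [schreier s a] spells, over V', the Schreier generator x^s a x^-(s + phi a)
   of its kernel, and [lift] is the candidate embedding of G(E') onto it. *)
Variables (schreier : nat -> V -> word V') (lift : V' -> word V).

Definition rewrite_letter s (a : V * bool) : word V' :=
  if a.2 then winv (schreier (next_level s a) a.1) else schreier s a.1.
Fixpoint rewrite_word s (w : word V) : word V' :=
  if w is a :: w' then rewrite_letter s a ++ rewrite_word (next_level s a) w' else [::].
Definition lift_letter (a : V' * bool) : word V := if a.2 then winv (lift a.1) else lift a.1.
Definition lift_word (w : word V') : word V := flatten (map lift_letter w).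

Lemma next_level_lt s a : next_level s a < m.
Proof. exact: ltn_pmod. Qed.

Lemma level_lt s w : s < m -> level s w < m.
Proof. by elim: w s => [|a w IH] s //= _; apply/IH/next_level_lt. Qed.

Lemma level_cat s u w : level s (u ++ w) = level (level s u) w.
Proof. exact: foldl_cat. Qed.

Lemma levelE s w : s < m -> level s w = (s + sumn (map weight w)) %% m.
Proof.
elim: w s => [|a w IH] s hs /=; first by rewrite addn0 modn_small.
by rewrite IH ?next_level_lt // modnDml addnA.
Qed.

Lemma rewrite_word_cat s u w :
  rewrite_word s (u ++ w) = rewrite_word s u ++ rewrite_word (level s u) w.
Proof. by elim: u s => [|a u IH] s //=; rewrite IH catA. Qed.

Lemma next_levelK s y b : s < m -> next_level (next_level s (y, b)) (y, ~~ b) = s.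
Proof.
move=> hs; rewrite /next_level modnDml -addnA.
have -> : weight (y, b) + weight (y, ~~ b) = m.
  by rewrite /weight; case: b; case: (phi y) => /=; lia.
by rewrite modnDr modn_small.
Qed.

Definition same_rewriting (u w : word V) :=
  forall s, s < m -> rewrite_word s u ≡' rewrite_word s w /\ level s u = level s w.

Hypothesis schreier_comm : forall s a b, s < m -> E a b ->
  schreier s a ++ schreier ((s + phi a) %% m) b ≡' schreier s b ++ schreier ((s + phi b) %% m) a.

Lemma same_rewriting_of_raag_eq u w : u ≡ w -> same_rewriting u w.
Proof.
apply: raag_eq_sub.
- split.
  + by move=> u' s _.
  + by move=> u' w' uw s hs; have [R1 L1] := uw s hs; rewrite R1 L1.
  + move=> u' w' z uw wz s hs; have [R1 L1] := uw s hs; have [R2 L2] := wz s hs.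
    by rewrite R1 L1.
- move=> u1 u2 u12 w1 w2 w12 s hs; have [R1 L1] := u12 s hs.
  have [R2 L2] := w12 _ (level_lt u1 hs).
  by rewrite !rewrite_word_cat !level_cat -L1 R1 R2 L2.
- move=> y b s hs; rewrite /level /= next_levelK //; split=> //.
  rewrite /rewrite_letter /= cats0; case: b => /=; first exact: mulVw.
  by rewrite next_levelK //; apply: mulwV.
- move=> a b ab s hs; split.
    by rewrite /= /rewrite_letter /= !cats0; apply: schreier_comm.
  by rewrite !levelE //= /weight /=; congr (_ %% _); lia.
Qed.

Lemma level_winv s u : s < m -> level (level s u) (winv u) = s.
Proof.
by move=> hs; rewrite -level_cat; have [_ ->] := same_rewriting_of_raag_eq (mulwV E u) hs.
Qed.

Lemma lift_word_cat u w : lift_word (u ++ w) = lift_word u ++ lift_word w.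
Proof. by rewrite /lift_word map_cat flatten_cat. Qed.

Lemma lift_word_winv u : lift_word (winv u) = winv (lift_word u).
Proof.
elim: u => [|[y b] u IH] //.
rewrite winv_cons lift_word_cat IH -[(y, b) :: u]/([:: (y, b)] ++ u) lift_word_cat winv_cat.
by rewrite /lift_word /lift_letter /= !cats0; case: b; rewrite ?winvK.
Qed.

Lemma winv_xpow n : winv (xpow n) = nseq n (x, true).
Proof. by rewrite /winv /xpow map_nseq rev_nseq. Qed.

Hypothesis lift_schreier : forall s a, s < m ->
  lift_word (schreier s a) ≡ xpow s ++ (a, false) :: winv (xpow ((s + phi a) %% m)).
Hypothesis schreier_lift : forall a,
  rewrite_word 0 (lift a) ≡' [:: (a, false)] /\ level 0 (lift a) = 0.
Hypothesis lift_comm : forall a b, E' a b -> lift a ++ lift b ≡ lift b ++ lift a.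

Lemma lift_rewrite_letter s a : s < m ->
  lift_word (rewrite_letter s a) ≡ xpow s ++ a :: winv (xpow (next_level s a)).
Proof.
move=> hs; case: a => y [|]; last exact: lift_schreier.
rewrite /rewrite_letter /= lift_word_winv.
rewrite (raag_eq_winv (lift_schreier y (next_level_lt s (y, true)))).
have -> : (next_level s (y, true) + phi y) %% m = s by exact: (next_levelK y true hs).
by rewrite winv_cat winv_cons winvK -catA.
Qed.

Lemma lift_rewrite_word w s : s < m ->
  lift_word (rewrite_word s w) ≡ xpow s ++ w ++ winv (xpow (level s w)).
Proof.
elim: w s => [|a w IH] s hs /=; first by rewrite mulwV.
rewrite lift_word_cat (lift_rewrite_letter a hs) (IH _ (next_level_lt _ _)).
by rewrite -catA cat_cons mulKw.
Qed.

Lemma rewrite_lift_word a : rewrite_word 0 (lift_word a) ≡' a /\ level 0 (lift_word a) = 0.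
Proof.
have rewrite_lift_letter b :
    rewrite_word 0 (lift_letter b) ≡' [:: b] /\ level 0 (lift_letter b) = 0.
  case: b => y [|]; last exact: schreier_lift.
  have [R0 L0] := schreier_lift y.
  rewrite /lift_letter /=; split; last by rewrite -{1}L0 level_winv.
  have [R1 _] := same_rewriting_of_raag_eq (mulwV E (lift y)) (ltn0Sn m').
  move: R1; rewrite rewrite_word_cat L0 /= => /raag_eq_divl ->.
  by rewrite cats0 R0.
elim: a => [|b a [IH1 IH2]] //.
have [R1 L1] := rewrite_lift_letter b.
rewrite -[b :: a]/([:: b] ++ a) lift_word_cat rewrite_word_cat level_cat.
by rewrite /lift_word /= cats0 -/(lift_word a) L1 IH2 R1 IH1.
Qed.

Definition kernel (w : word V) : Prop := level 0 w = 0.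

Lemma kernel_subgroup : is_subgroup E kernel.
Proof.
split; rewrite /kernel.
- by move=> u w uw Hu; have [_ <-] := same_rewriting_of_raag_eq uw (ltn0Sn m').
- by [].
- by move=> u w Hu Hw; rewrite level_cat Hu.
- by move=> u Hu; rewrite -{1}Hu level_winv.
Qed.

Lemma kernel_finite_index : finite_index E kernel.
Proof.
exists [seq xpow s | s <- iota 0 m] => w.
exists (xpow (level 0 w)); split; first by rewrite map_f // mem_iota level_lt.
exists (winv (xpow (level 0 w)) ++ w); split; last by rewrite mulKVw.
have := levelE w (ltn0Sn m'); rewrite add0n => Lw.
rewrite /kernel (@levelE 0 (_ ++ w)) // map_cat sumn_cat winv_xpow map_nseq sumn_nseq.
rewrite /weight /= phi_x subn1 /=.
by rewrite add0n -modnDmr -Lw -mulSnr modnMr.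
Qed.

Lemma lift_word_iso : iso_to_subgroup E' E kernel.
Proof.
exists lift_word; split.
- apply: (raag_eq_sub (R := fun u w => lift_word u ≡ lift_word w)).
  + by split=> [u|u w|u w z] //; [symmetry | transitivity (lift_word w)].
  + by move=> u u' uu' w w' ww'; rewrite !lift_word_cat uu' ww'.
  + by move=> y [|]; rewrite /lift_word /lift_letter /= cats0; [apply: mulVw | apply: mulwV].
  + by move=> a b ab; rewrite /lift_word /lift_letter /= !cats0; apply: lift_comm.
- by move=> a b; rewrite lift_word_cat.
- move=> a b ab.
  have [Ra _] := rewrite_lift_word a; have [Rb _] := rewrite_lift_word b.
  have [R _] := same_rewriting_of_raag_eq ab (ltn0Sn m').
  by rewrite -Ra R Rb.
- by move=> a; have [_] := rewrite_lift_word a.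
- move=> w Hw; exists (rewrite_word 0 w).
  by rewrite (lift_rewrite_word w (ltn0Sn m')) Hw /= cats0.
Qed.

Theorem cyclic_cover_fi_embeds : fi_embeds E' E.
Proof.
exists kernel; split; [exact: kernel_subgroup | exact: kernel_finite_index | exact: lift_word_iso].
Qed.

End CyclicCover.

Section TreeVertices.
Variables (l : nat) (d k : 'I_l -> nat) (q : nat).

Definition centerv : tvert d k q := inl (inl (inl tt)).
Definition hairv (h : 'I_q) : tvert d k q := inl (inl (inr h)).
Definition pivotv (P : pivT k) : tvert d k q := inl (inr P).
Definition leafv (L : leafT d k) : tvert d k q := inr L.
Definition piv j (a : 'I_(k j)) : pivT k := existT _ j a.

End TreeVertices.
Arguments centerv {l d k q}.
Arguments hairv {l d k q}.
Arguments pivotv {l d k q}.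
Arguments leafv {l d k q}.

Section CoverTree.
Variables (l : nat) (d K : 'I_l -> nat) (Q m' : nat) (one : pivT K -> bool) (x : pivT K).
Hypothesis one_x : one x.
Local Notation m := m'.+1.

(* Pivot (P, s) of the cover stands for x^s P x^-s, or for P^m if [one P];
   its hairs are the x^s h x^-s and the x^s P x^-(s+1) with [one P], P != x. *)
Definition last_copy (P : pivT K) : nat := if one P then 0 else m'.
Definition pivot_copy j : finType := {a : 'I_(K j) & 'I_(last_copy (piv a)).+1}.
Definition cover_k j : nat := #|pivot_copy j|.
Definition extra_hair : finType := {P : pivT K | one P && (P != x)}.
Definition hair_copy : finType := ('I_Q * 'I_m + extra_hair * 'I_m')%type.
Definition cover_q : nat := #|hair_copy|.

Lemma cover_kE j : cover_k j = \sum_(a < K j) (last_copy (piv a)).+1.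
Proof.
rewrite /cover_k card_tagged sumnE big_map big_enum /=.
by apply: eq_bigr => a _; rewrite card_ord.
Qed.

Lemma cover_qE : cover_q = Q * m + #|extra_hair| * m'.
Proof. by rewrite /cover_q card_sum !card_prod !card_ord. Qed.

Local Notation S := (tvert d K Q).
Local Notation T := (tvert d cover_k cover_q).
Local Notation ES := (@tree_adj l d K Q).
Local Notation ET := (@tree_adj l d cover_k cover_q).
Local Notation "u ≡ w" := (raag_eq ES u w) (at level 70).
Local Notation "u ≡' w" := (raag_eq ET u w) (at level 70).

Definition copy_rank j (a : 'I_(K j)) (s : nat) : 'I_(cover_k j) :=
  enum_rank (existT _ a (inord s) : pivot_copy j).
Definition copy (P : pivT K) (s : nat) : pivT cover_k := existT _ (tag P) (copy_rank (tagged P) s).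
Definition copy_base (P' : pivT cover_k) : pivT K := piv (tag (enum_val (tagged P'))).
Definition copy_index (P' : pivT cover_k) : nat := tagged (enum_val (tagged P')).
Definition copy_leaf (L : leafT d K) (s : nat) : leafT d cover_k :=
  existT (fun P' : pivT cover_k => 'I_(d (tag P'))) (copy (tag L) s) (tagged L).
Definition leaf_base (L' : leafT d cover_k) : leafT d K :=
  existT (fun P : pivT K => 'I_(d (tag P))) (copy_base (tag L')) (tagged L').

Lemma copy_rankK j (t : 'I_(cover_k j)) :
  copy_rank (tag (enum_val t)) (tagged (enum_val t)) = t.
Proof. by rewrite /copy_rank; case E: (enum_val t) => [a s] /=; rewrite inord_val -E enum_valK. Qed.

Lemma copyK P' : copy (copy_base P') (copy_index P') = P'.
Proof. by case: P' => j t; rewrite /copy /= copy_rankK. Qed.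

Lemma copy_index_le P' : copy_index P' <= last_copy (copy_base P').
Proof. by rewrite -ltnS; apply: ltn_ord. Qed.

Lemma copy_rank_tag j (a : 'I_(K j)) s : tag (enum_val (copy_rank a s)) = a.
Proof. by rewrite /copy_rank enum_rankK. Qed.

Lemma copy_rank_tagged j (a : 'I_(K j)) s : s <= last_copy (piv a) ->
  tagged (enum_val (copy_rank a s)) = s :> nat.
Proof. by move=> hs; rewrite /copy_rank enum_rankK /= inordK. Qed.

Lemma copy_baseK P s : copy_base (copy P s) = P.
Proof. by case: P => j a; rewrite /copy_base /= copy_rank_tag. Qed.

Lemma copy_indexK P s : s <= last_copy P -> copy_index (copy P s) = s.
Proof. by case: P => j a; apply: copy_rank_tagged. Qed.

Lemma leaf_baseK L s : leaf_base (copy_leaf L s) = L.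
Proof. by case: L => [[j a] r]; rewrite /leaf_base /copy_leaf /copy_base /= copy_rank_tag. Qed.

Lemma copy_leafK L' : copy_leaf (leaf_base L') (copy_index (tag L')) = L'.
Proof. by case: L' => [[j t] r]; rewrite /copy_leaf /copy /= copy_rankK. Qed.

Definition hair_rank (h : 'I_Q) (s : nat) : 'I_cover_q := enum_rank (inl (h, inord s) : hair_copy).

Definition extra_hair_word (P : pivT K) (s : nat) : word T :=
  if insub P : option extra_hair is Some P' then
    if insub s : option 'I_m' is Some s' then
      [:: (hairv (enum_rank (inr (P', s') : hair_copy)), false)]
    else [::]
  else [::].
Definition extra_hairs P n : word T := flatten [seq extra_hair_word P i | i <- iota 0 n].

Lemma extra_hair_word_x s : extra_hair_word x s = [::].
Proof. by rewrite /extra_hair_word insubN // eqxx andbF. Qed.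

Lemma extra_hair_word_enum_val q P' (s : 'I_m') : (enum_val q : hair_copy) = inr (P', s) ->
  extra_hair_word (val P') s = [:: (hairv q, false)].
Proof. by move=> E; rewrite /extra_hair_word !valK -E enum_valK. Qed.

Lemma extra_hairsS P n : extra_hairs P n.+1 = extra_hairs P n ++ extra_hair_word P n.
Proof. by rewrite /extra_hairs -addn1 iotaD map_cat flatten_cat /= cats0. Qed.

Definition phi (v : S) : bool := if v is inl (inr P) then one P else false.
Local Notation xS := (pivotv x : S).
Local Notation tS := (xpow xS).
Definition xconj s (w : word S) : word S := tS s ++ w ++ winv (tS s).

(* x^m' P = (P^m' x^-m')^-1 P^m, where P^m' x^-m' is the product of the hairs
   x^s P x^-(s+1), s < m'; and as a leaf L of P commutes with P,
   x^s L x^-s = (P^s x^-s)^-1 L (P^s x^-s). *)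
Definition schreier_word (s : nat) (v : S) : word T :=
  match v with
  | inl (inl (inl _)) => [:: (centerv, false)]
  | inl (inl (inr h)) => [:: (hairv (hair_rank h s), false)]
  | inl (inr P) =>
      if one P then
        if s < m' then extra_hair_word P s
        else winv (extra_hairs P m') ++ [:: (pivotv (copy P 0), false)]
      else [:: (pivotv (copy P s), false)]
  | inr L =>
      if one (tag L) then
        winv (extra_hairs (tag L) s) ++ (leafv (copy_leaf L 0), false) :: extra_hairs (tag L) s
      else [:: (leafv (copy_leaf L s), false)]
  end.

Arguments schreier_word : simpl never.

Definition lift (v : T) : word S :=
  match v with
  | inl (inl (inl _)) => [:: (centerv, false)]
  | inl (inl (inr q)) =>
      match (enum_val q : hair_copy) with
      | inl (h, s) => xconj s [:: (hairv h, false)]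
      | inr (P', s) => tS s ++ (pivotv (val P'), false) :: winv (tS s.+1)
      end
  | inl (inr P') =>
      if one (copy_base P') then nseq m (pivotv (copy_base P'), false)
      else xconj (copy_index P') [:: (pivotv (copy_base P'), false)]
  | inr L' => xconj (copy_index (tag L')) [:: (leafv (leaf_base L'), false)]
  end.

Arguments lift : simpl never.

Local Notation rw := (rewrite_word m' phi schreier_word).
Local Notation lvl := (level m' phi).
Local Notation liftw := (lift_word lift).

Lemma schreier_word_x s : s < m' -> schreier_word s xS = [::].
Proof. by move=> hs; rewrite /schreier_word /= one_x hs extra_hair_word_x. Qed.

Lemma rewrite_xpow n s : s + n <= m' -> rw s (tS n) = [::] /\ lvl s (tS n) = s + n.
Proof.
elim: n s => [|n IH] s hn; first by rewrite addn0.
have hs : s < m' by lia.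
have next : next_level m' phi s (xS, false) = s.+1.
  by rewrite /next_level /weight /= one_x addn1 modn_small //; lia.
rewrite /= /rewrite_letter /= schreier_word_x // next.
by have [-> ->] := IH s.+1 ltac:(lia); rewrite addnS.
Qed.

Lemma rewrite_winv_xpow n s : n <= s -> s <= m' ->
  rw s (winv (tS n)) = [::] /\ lvl s (winv (tS n)) = s - n.
Proof.
rewrite winv_xpow; elim: n s => [|n IH] s h1 h2; first by rewrite subn0.
have next : next_level m' phi s (xS, true) = s.-1.
  rewrite /next_level /weight /= one_x subn1 /=.
  have -> : s + m' = s.-1 + m by lia.
  by rewrite modnDr modn_small //; lia.
rewrite /= /rewrite_letter /= next schreier_word_x; last by lia.
by have [-> ->] := IH s.-1 ltac:(lia) ltac:(lia); split=> //; lia.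
Qed.

Lemma rewrite_xconj s w : s <= m' -> lvl s w = s ->
  rw 0 (xconj s w) = rw s w /\ lvl 0 (xconj s w) = 0.
Proof.
move=> hs hw; rewrite /xconj !rewrite_word_cat !level_cat.
have [-> ->] := @rewrite_xpow s 0 hs; rewrite add0n hw.
by have [-> ->] := rewrite_winv_xpow (leqnn s) hs; rewrite cats0 subnn.
Qed.

Lemma extra_hairs_center_adj P n : all (fun c => ET centerv c.1) (extra_hairs P n).
Proof.
rewrite /extra_hairs; elim: (iota 0 n) => //= i r IH; rewrite all_cat IH andbT /extra_hair_word.
by case: insub => // P'; case: insub.
Qed.

Lemma schreier_pivot_center_adj s P : all (fun c => ET centerv c.1) (schreier_word s (pivotv P)).
Proof.
rewrite /schreier_word /=; case: (one P) => //; case: ifP => _.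
  by have := extra_hairs_center_adj P s.+1; rewrite extra_hairsS all_cat => /andP[].
by rewrite all_cat /winv all_rev all_map extra_hairs_center_adj.
Qed.

Lemma schreier_pivot_leaf s P L : s < m -> tag L = P ->
  schreier_word s (pivotv P) ++ schreier_word ((s + one P) %% m) (leafv L)
  ≡' schreier_word s (leafv L) ++ schreier_word s (pivotv P).
Proof.
move=> hs <-; rewrite /schreier_word /=; case oP: (one (tag L)) => /=; last first.
  by rewrite addn0 modn_small //; apply: (re_comm [::] [::]); rewrite /tree_adj /= eqxx.
rewrite addn1; case: ltnP => hs'.
  by rewrite modn_small // extra_hairsS winv_cat -!catA mulKVw catA.
have -> : s = m' by lia.
rewrite modnn -!catA; apply: raag_eq_catl.
transitivity [:: (leafv (copy_leaf L 0) : T, false); (pivotv (copy (tag L) 0), false)].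
  by apply: (re_comm [::] [::]); rewrite /tree_adj /= eqxx.
by symmetry; apply: (raag_eq_catl [:: _]); apply: mulKVw.
Qed.

Lemma schreier_comm_edge s a b : s < m -> tedge0 a b ->
  schreier_word s a ++ schreier_word ((s + phi a) %% m) b
  ≡' schreier_word s b ++ schreier_word ((s + phi b) %% m) a.
Proof.
move=> hs; case: a => [[[[]|h]|P]|L]; case: b => [[[[]|h']|P']|L'] //= ab.
- by rewrite addn0 modn_small //; apply: (re_comm [::] [::]).
- rewrite addn0 modn_small //.
  by apply: (commute_letter (a := (centerv, false))); apply: schreier_pivot_center_adj.
- by move/eqP: ab => ab; rewrite addn0 (modn_small hs); apply: schreier_pivot_leaf.
Qed.

Lemma schreier_comm s a b : s < m -> ES a b ->
  schreier_word s a ++ schreier_word ((s + phi a) %% m) b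
  ≡' schreier_word s b ++ schreier_word ((s + phi b) %% m) a.
Proof.
by move=> hs /orP[ab | ba]; [apply: schreier_comm_edge | symmetry; apply: schreier_comm_edge].
Qed.

Lemma xconj0 w : xconj 0 w = w.
Proof. by rewrite /xconj cats0. Qed.

Lemma lift_word1 v : liftw [:: (v, false)] = lift v.
Proof. by rewrite /lift_word /= cats0. Qed.

Lemma lift_hair_rank h s : s < m -> lift (hairv (hair_rank h s)) = xconj s [:: (hairv h, false)].
Proof. by move=> hs; rewrite /lift /= enum_rankK /= inordK. Qed.

Lemma lift_copy P s : ~~ one P -> s < m ->
  lift (pivotv (copy P s)) = xconj s [:: (pivotv P, false)].
Proof.
move=> /negbTE oP hs.
by rewrite /lift /= copy_baseK oP copy_indexK // /last_copy oP.
Qed.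

Lemma lift_copy0 P : one P -> lift (pivotv (copy P 0)) = nseq m (pivotv P, false).
Proof. by move=> oP; rewrite /lift /= copy_baseK oP. Qed.

Lemma lift_copy_leaf L s : s <= last_copy (tag L) ->
  lift (leafv (copy_leaf L s)) = xconj s [:: (leafv L, false)].
Proof. by move=> hs; rewrite /lift /= copy_indexK // leaf_baseK. Qed.

Lemma lift_extra_hair_word P s : one P -> s < m' ->
  liftw (extra_hair_word P s) ≡ tS s ++ (pivotv P, false) :: winv (tS s.+1).
Proof.
move=> oP hs; case: (eqVneq P x) => [->|nPx].
  by rewrite extra_hair_word_x -cat1s catA -nseqSr mulwV.
rewrite /extra_hair_word insubT ?oP ?nPx // => oP'.
by rewrite insubT lift_word1 /lift /= enum_rankK.
Qed.

Lemma lift_extra_hairs P n : one P -> n <= m' ->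
  liftw (extra_hairs P n) ≡ nseq n (pivotv P, false) ++ winv (tS n).
Proof.
move=> oP; elim: n => [|n IH] hn //.
rewrite extra_hairsS lift_word_cat IH ?(ltnW hn) // lift_extra_hair_word // -!catA mulKw.
by rewrite -cat1s catA -nseqSr.
Qed.

Lemma lift_schreier_pivot s P : s < m ->
  liftw (schreier_word s (pivotv P)) ≡ tS s ++ (pivotv P, false) :: winv (tS ((s + one P) %% m)).
Proof.
move=> hs; rewrite /schreier_word /=; case oP: (one P) => /=; last first.
  by rewrite addn0 modn_small // lift_word1 lift_copy ?oP.
case: ltnP => hsm.
  by rewrite lift_extra_hair_word // addn1 modn_small.
have -> : s = m' by lia.
rewrite addn1 modnn lift_word_cat lift_word_winv lift_word1 lift_copy0 //.
by rewrite (lift_extra_hairs oP (leqnn m')) winv_cat winvK -catA nseqSr mulKw.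
Qed.

Lemma lift_schreier_leaf s L : s < m ->
  liftw (schreier_word s (leafv L)) ≡ tS s ++ (leafv L, false) :: winv (tS s).
Proof.
move=> hs; rewrite /schreier_word /=; case oP: (one (tag L)); last first.
  by rewrite lift_word1 lift_copy_leaf // /last_copy oP.
pose Ps := nseq s (pivotv (tag L) : S, false).
have conj_L : winv Ps ++ (leafv L, false) :: Ps ≡ [:: (leafv L, false)].
  have := @conj_letter _ ES (leafv L, false) (winv Ps); rewrite winvK; apply.
  by rewrite /winv all_rev all_map all_nseq /tree_adj /= eqxx orbT.
rewrite lift_word_cat lift_word_winv -cat1s lift_word_cat lift_word1 lift_copy_leaf //.
rewrite xconj0 (lift_extra_hairs oP (_ : s <= m')) // winv_cat winvK -!catA.
apply: raag_eq_catl; transitivity ((winv Ps ++ (leafv L, false) :: Ps) ++ winv (tS s)).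
  by rewrite -catA.
by rewrite conj_L.
Qed.

Lemma lift_schreier s a : s < m ->
  liftw (schreier_word s a) ≡ tS s ++ (a, false) :: winv (tS ((s + phi a) %% m)).
Proof.
move=> hs; case: a => [[[[]|h]|P]|L].
- rewrite addn0 modn_small // lift_word1 /lift /=; symmetry.
  by apply: conj_letter; rewrite all_nseq orbT.
- by rewrite addn0 modn_small // lift_word1 lift_hair_rank.
- exact: lift_schreier_pivot.
- by rewrite addn0 modn_small //; apply: lift_schreier_leaf.
Qed.

Lemma rewrite_word1 s v : rw s [:: (v, false)] = schreier_word s v.
Proof. by rewrite /= /rewrite_letter cats0. Qed.

Lemma level_letter s v : lvl s [:: (v, false)] = (s + phi v) %% m.
Proof. by []. Qed.

Lemma rewrite_pivot_pow P n s : one P -> s + n <= m' ->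
  rw s (nseq n (pivotv P, false)) = flatten [seq extra_hair_word P i | i <- iota s n] /\
  lvl s (nseq n (pivotv P, false)) = s + n.
Proof.
move=> oP; elim: n s => [|n IH] s hn; first by rewrite addn0.
have next : next_level m' phi s (pivotv P, false) = s.+1.
  by rewrite /next_level /weight /= oP addn1 modn_small //; lia.
rewrite /= /rewrite_letter /= next /schreier_word /= oP ifT; last by lia.
by have [-> ->] := IH s.+1 ltac:(lia); rewrite addnS.
Qed.

Lemma schreier_word_pivot_last P : one P ->
  schreier_word m' (pivotv P) = winv (extra_hairs P m') ++ [:: (pivotv (copy P 0), false)].
Proof. by move=> oP; rewrite /schreier_word /= oP ltnn. Qed.

Lemma rewrite_pivot_power P : one P ->
  rw 0 (nseq m (pivotv P, false)) ≡' [:: (pivotv (copy P 0), false)] /\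
  lvl 0 (nseq m (pivotv P, false)) = 0.
Proof.
move=> oP; rewrite nseqSr rewrite_word_cat level_cat.
have [-> ->] := @rewrite_pivot_pow P m' 0 oP (leqnn _).
rewrite add0n rewrite_word1 level_letter [phi _]/= oP addn1 modnn; split=> //.
by rewrite schreier_word_pivot_last // -/(extra_hairs P m') catA mulwV.
Qed.

Lemma schreier_lift_hair q :
  rw 0 (lift (hairv q)) ≡' [:: (hairv q, false)] /\ lvl 0 (lift (hairv q)) = 0.
Proof.
rewrite /lift /=; case E: (enum_val q) => [[h s]|[P s]].
  have [-> ->] := @rewrite_xconj s [:: (hairv h, false)] (ltn_ord s)
    ltac:(by rewrite level_letter addn0 modn_small).
  by rewrite rewrite_word1 /schreier_word /= /hair_rank inord_val -E enum_valK.
have oP : one (val P) by have /andP[] := valP P.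
have next : next_level m' phi s (pivotv (val P), false) = s.+1.
  by rewrite /next_level /weight /= oP addn1 modn_small ?ltnS ?ltn_ord.
rewrite -cat1s !rewrite_word_cat !level_cat.
have [-> ->] := @rewrite_xpow s 0 (ltnW (ltn_ord s)); rewrite add0n rewrite_word1 /= next.
have [-> ->] := rewrite_winv_xpow (leqnn s.+1) (ltn_ord s); rewrite subnn; split=> //.
by rewrite /schreier_word /= oP ltn_ord (extra_hair_word_enum_val E) cats0.
Qed.

Lemma schreier_lift_pivot P' :
  rw 0 (lift (pivotv P')) ≡' [:: (pivotv P', false)] /\ lvl 0 (lift (pivotv P')) = 0.
Proof.
have sle := copy_index_le P'; rewrite /lift /=; case: ifP => oP.
  move: sle; rewrite /last_copy oP leqn0 => /eqP s0.
  by have := rewrite_pivot_power oP; rewrite -s0 copyK.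
have hs : copy_index P' <= m' by rewrite /last_copy oP in sle.
have [-> ->] := @rewrite_xconj _ [:: (pivotv (copy_base P'), false)] hs
  ltac:(by rewrite level_letter /= oP addn0 modn_small).
by rewrite rewrite_word1 /schreier_word /= oP copyK.
Qed.

Lemma schreier_lift_leaf L' :
  rw 0 (lift (leafv L')) ≡' [:: (leafv L', false)] /\ lvl 0 (lift (leafv L')) = 0.
Proof.
have sle := copy_index_le (tag L'); rewrite /lift /=.
have hs : copy_index (tag L') <= m' by move: sle; rewrite /last_copy; case: ifP => // _; lia.
have [-> ->] := @rewrite_xconj _ [:: (leafv (leaf_base L'), false)] hs
  ltac:(by rewrite level_letter addn0 modn_small).
rewrite rewrite_word1 /schreier_word /=; case: ifP => oP; last by rewrite copy_leafK.
move: sle; rewrite /last_copy oP leqn0 => /eqP s0.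
by have := copy_leafK L'; rewrite s0 => ->.
Qed.

Lemma schreier_lift v : rw 0 (lift v) ≡' [:: (v, false)] /\ lvl 0 (lift v) = 0.
Proof.
case: v => [[[[]|q]|P']|L'].
- by rewrite /lift /= /rewrite_letter /next_level /weight /= mod0n.
- exact: schreier_lift_hair.
- exact: schreier_lift_pivot.
- exact: schreier_lift_leaf.
Qed.

Lemma xconj_center_adj s w : all (fun c => ES centerv c.1) w ->
  all (fun c => ES centerv c.1) (xconj s w).
Proof.
move=> Hw; rewrite /xconj !all_cat Hw winv_xpow.
by rewrite !all_nseq /tree_adj /= !orbT.
Qed.

Lemma lift_hair_center_adj q : all (fun c => ES centerv c.1) (lift (hairv q)).
Proof.
rewrite /lift /=; case: (enum_val q) => [[h s]|[P s]]; first exact: xconj_center_adj.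
by rewrite all_cat /= winv_cons all_cat winv_xpow !all_nseq /tree_adj /= !orbT.
Qed.

Lemma lift_pivot_center_adj P' : all (fun c => ES centerv c.1) (lift (pivotv P')).
Proof.
rewrite /lift /=; case: ifP => _; last exact: xconj_center_adj.
by rewrite /= all_nseq /tree_adj /= orbT.
Qed.

Lemma lift_pivot_leaf P' L' : tag L' = P' ->
  lift (pivotv P') ++ lift (leafv L') ≡ lift (leafv L') ++ lift (pivotv P').
Proof.
move=> <-; have sle := copy_index_le (tag L'); rewrite /lift /=; case: ifP => oP.
  move: sle; rewrite /last_copy oP leqn0 => /eqP ->; rewrite xconj0.
  by apply: commute_words; rewrite /= andbT all_nseq /tree_adj /= eqxx orbT.
by apply: conj_commute; apply: (re_comm [::] [::]); rewrite /tree_adj /= eqxx.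
Qed.

Lemma lift_comm_edge a b : tedge0 a b -> lift a ++ lift b ≡ lift b ++ lift a.
Proof.
case: a => [[[[]|q]|P']|L']; case: b => [[[[]|q']|P'']|L''] //= ab.
- by apply: (commute_words (u := [:: _])); rewrite /= andbT lift_hair_center_adj.
- by apply: (commute_words (u := [:: _])); rewrite /= andbT lift_pivot_center_adj.
- by apply: lift_pivot_leaf; apply/eqP.
Qed.

Lemma lift_comm a b : ET a b -> lift a ++ lift b ≡ lift b ++ lift a.
Proof. by case/orP=> [ab | ba]; [apply: lift_comm_edge | symmetry; apply: lift_comm_edge]. Qed.

Theorem cover_tree_fi_embeds : fi_embeds ET ES.
Proof.
exact: (@cyclic_cover_fi_embeds _ _ ES ET m' phi xS one_x _ _
          schreier_comm lift_schreier schreier_lift lift_comm).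
Qed.

End CoverTree.

Local Notation tree d k q := (@tree_adj _ d k q).

Lemma fi_embeds_scale_class l (d K : 'I_l -> nat) Q (i0 j0 : 'I_l) m' :
  i0 != j0 -> 0 < K j0 ->
  exists Q', fi_embeds (tree d (fun j => if j == i0 then K j * m'.+1 else K j) Q') (tree d K Q).
Proof.
move=> i0j0 Kj0.
pose x : pivT K := piv (Ordinal Kj0).
pose one (P : pivT K) := tag P != i0.
have one_x : one x by rewrite /one /= eq_sym.
exists (cover_q Q m' one x).
have -> : (fun j => if j == i0 then K j * m'.+1 else K j) = cover_k m' one.
  apply: functional_extensionality => j; rewrite cover_kE /last_copy /one /=.
  by rewrite sum_nat_const card_ord; case: (j == i0); rewrite ?muln1.
exact: cover_tree_fi_embeds.
Qed.

Lemma fi_embeds_two_pivots (d m' : nat) :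
  fi_embeds (tree (fun _ : 'I_1 => d) (fun _ => m'.+2) 0) (tree (fun _ : 'I_1 => d) (fun _ => 2) 0).
Proof.
pose K := fun _ : 'I_1 => 2.
pose x : pivT K := piv (ord0 : 'I_(K ord0)).
pose one (P : pivT K) := val (tagged P) == 0.
have one_x : one x by [].
have -> : (fun _ => m'.+2) = cover_k m' one.
  apply: functional_extensionality => j.
  by rewrite cover_kE 2!big_ord_recl big_ord0 /last_copy /one /= addn0.
have cover_q0 : cover_q 0 m' one x = 0.
  rewrite cover_qE mul0n add0n card_sig (eq_card0 (_ : _ =i pred0)) // => -[j a].
  rewrite !inE /one /=; apply/negP => /andP[/eqP a0 /eqP []].
  by rewrite (ord1 j); congr existT; apply: val_inj.
suff: fi_embeds (tree (fun _ => d) (cover_k m' one) (cover_q 0 m' one x)) (tree (fun _ => d) K 0)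
  by rewrite cover_q0.
exact: cover_tree_fi_embeds.
Qed.

Lemma fi_embeds_scale_classes l (d k : 'I_l -> nat) : 2 <= l -> (forall i, 0 < k i) ->
  exists q, fi_embeds (tree d k q) (tree d (fun _ => 1) 0).
Proof.
move=> l2 k_gt0.
suff prefix n : n <= l ->
    exists q, fi_embeds (tree d (fun j : 'I_l => if j < n then k j else 1) q)
                        (tree d (fun _ => 1) 0).
  have -> : k = (fun j : 'I_l => if j < l then k j else 1).
    by apply: functional_extensionality => j; rewrite ltn_ord.
  exact: prefix.
elim: n => [|n IH] ltnl; first by exists 0; apply: fi_embeds_refl.
have [q1 emb1] := IH (ltnW ltnl).
pose K (j : 'I_l) := if j < n then k j else 1.
pose i0 : 'I_l := Ordinal ltnl.
have [j0 i0j0] : exists j0 : 'I_l, i0 != j0.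
  have j0_lt : (n == 0 : nat) < l by case: (n == 0); lia.
  by exists (Ordinal j0_lt); rewrite -val_eqE /=; case: (n =P 0) => /= [->|]; lia.
have K_j0 : 0 < K j0 by rewrite /K; case: ifP.
have [q2 emb2] := fi_embeds_scale_class d q1 (k i0).-1 i0j0 K_j0.
exists q2; apply: fi_embeds_trans emb1.
suff -> : (fun j : 'I_l => if j < n.+1 then k j else 1) =
          (fun j => if j == i0 then K j * (k i0).-1.+1 else K j) by [].
apply: functional_extensionality => j; rewrite /K prednK // ltnS leq_eqVlt -[j == i0]val_eqE /=.
by case: eqP => [jn|] //=; rewrite jn ltnn mul1n; congr k; apply: val_inj.
Qed.

Theorem mainTheorem6 :
  (forall (l : nat) (v k : 'I_l -> nat),
      2 <= l ->
      (forall i, 0 < v i) ->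
      (forall i j : 'I_l, i < j -> v i < v j) ->
      (forall i, 0 < k i) ->
      exists (q : nat) (H : word (tvert v (fun _ => 1) 0) -> Prop),
        [/\ is_subgroup (tree_adj (d:=v) (k:=fun _ => 1) (q:=0)) H,
            finite_index (tree_adj (d:=v) (k:=fun _ => 1) (q:=0)) H &
            iso_to_subgroup (tree_adj (d:=v) (k:=k) (q:=q))
                            (tree_adj (d:=v) (k:=fun _ => 1) (q:=0)) H])
  /\
  (forall d k : nat, 0 < d -> 2 < k ->
      exists H : word (tvert (l:=1) (fun _ => d) (fun _ => 2) 0) -> Prop,
        [/\ is_subgroup (tree_adj (l:=1) (d:=fun _ => d) (k:=fun _ => 2) (q:=0)) H,
            finite_index (tree_adj (l:=1) (d:=fun _ => d) (k:=fun _ => 2) (q:=0)) H &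
            iso_to_subgroup (tree_adj (l:=1) (d:=fun _ => d) (k:=fun _ => k) (q:=0))
                            (tree_adj (l:=1) (d:=fun _ => d) (k:=fun _ => 2) (q:=0)) H]).
Proof.
split.
- by move=> l v k l2 _ _ k_gt0; apply: fi_embeds_scale_classes.
- move=> d k _ k_gt2.
  have -> : k = (k - 2).+2 by lia.
  exact: fi_embeds_two_pivots.
Qed.
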